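(* Let $(V,L,\varphi,E)$ and $(V,C,\psi,E)$ be valuation systems such that $\psi$ extends $\varphi$. Then for every ordinal number $\alpha$: if $\psi$ is $\Pi_\alpha$-extendible, then $\varphi$ is $\Pi_\alpha$-extendible and $\Pi_\alpha\psi$ extends $\Pi_\alpha\varphi$; and if $\psi$ is $\Sigma_\alpha$-extendible, then $\varphi$ is $\Sigma_\alpha$-extendible and $\Sigma_\alpha\psi$ extends $\Sigma_\alpha\varphi$.
   Context: A valuation system $(V,L,\varphi,E)$ consists of: (i) a lattice $V$ which is $\sigma$-distributive (for every $a\in V$ and sequence $(b_n)$ with existing infimum, $\bigwedge_n(a\vee b_n)$ exists and equals $a\vee\bigwedge_n b_n$, and dually for suprema); (ii) a sublattice $L$ of $V$; (iii) a partially ordered abelian group $E$ which is R-complete (whenever $x_1\ge x_2\ge\cdots$ and $y_1\ge y_2\ge\cdots$ in $E$ are such that $\bigwedge_n(x_n+y_n)$ exists, $\bigwedge_n x_n$ and $\bigwedge_n y_n$ exist; dually for increasing sequences); (iv) a valuation $\varphi:L\to E$ (order-preserving, $\varphi(a\wedge b)+\varphi(a\vee b)=\varphi(a)+\varphi(b)$). A map $\psi:C\to E$ extends $\varphi:L\to E$ if $L\subseteq C$ and $\psi|_L=\varphi$. A decreasing (resp. increasing) sequence $(a_n)$ in $L$ is $\varphi$-convergent if $\bigwedge_n a_n$ exists in $V$ and $\bigwedge_n\varphi(a_n)$ exists in $E$ (resp. with suprema). $\Pi L:=\{\bigwedge_n a_n:(a_n)\ \varphi\text{-convergent decreasing}\}$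 and $\varphi$ is $\Pi$-extendible if there is a valuation $\Pi\varphi:\Pi L\to E$ with $\Pi\varphi(\bigwedge_n a_n)=\bigwedge_n\varphi(a_n)$ for all such sequences; $\Sigma L,\Sigma$-extendible, $\Sigma\varphi$ dually. Hierarchy (transfinite recursion): $\varphi$ is $\Pi_0$- and $\Sigma_0$-extendible with $\Pi_0\varphi=\Sigma_0\varphi=\varphi$; $\varphi$ is $\Pi_{\alpha+1}$-extendible iff it is $\Sigma_\alpha$-extendible and $\Sigma_\alpha\varphi$ is $\Pi$-extendible, with $\Pi_{\alpha+1}\varphi=\Pi(\Sigma_\alpha\varphi)$; $\varphi$ is $\Sigma_{\alpha+1}$-extendible iff it is $\Pi_\alpha$-extendible and $\Pi_\alpha\varphi$ is $\Sigma$-extendible, with $\Sigma_{\alpha+1}\varphi=\Sigma(\Pi_\alpha\varphi)$; at a limit $\lambda$, $\varphi$ is $\Pi_\lambda$-extendible iff $\Pi_\alpha$-extendible for all $\alpha<\lambda$, and then $\Pi_\lambda\varphi$ is the common extension of the $\Pi_\alpha\varphi$ ($\alpha<\lambda$) on $\bigcup_{\alpha<\lambda}\Pi_\alpha L$; similarly for $\Sigma_\lambda$. The same definitions apply to $\psi$. *)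

From HB Require Import structures.
From mathcomp Require Import all_boot all_order all_algebra.
Set Implicit Arguments.
Unset Strict Implicit.
Unset Printing Implicit Defensive.
Import Order.TTheory GRing.Theory Num.Theory.

Local Open Scope order_scope.

Definition vs_is_inf {d} {T : porderType d} (s : nat -> T) (x : T) : Prop :=
  (forall n, x <= s n) /\ (forall y, (forall n, y <= s n) -> y <= x).

Definition vs_is_sup {d} {T : porderType d} (s : nat -> T) (x : T) : Prop :=
  (forall n, s n <= x) /\ (forall y, (forall n, s n <= y) -> x <= y).

Definition vs_decr {d} {T : porderType d} (s : nat -> T) : Prop :=
  forall n, s n.+1 <= s n.

Definition vs_incr {d} {T : porderType d} (s : nat -> T) : Prop :=
  forall n, s n <= s n.+1.

Definition sigma_distributive {d} (V : latticeType d) : Prop :=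
  (forall (a : V) (b : nat -> V) (x : V), vs_is_inf b x ->
      vs_is_inf (fun n => a `|` b n) (a `|` x)) /\
  (forall (a : V) (b : nat -> V) (x : V), vs_is_sup b x ->
      vs_is_sup (fun n => a `&` b n) (a `&` x)).

Definition sublattice {d} {V : latticeType d} (L : V -> Prop) : Prop :=
  forall a b, L a -> L b -> L (a `&` b) /\ L (a `|` b).

Definition po_group (E : porderZmodType) : Prop :=
  forall x y z : E, x <= y -> (x + z)%R <= (y + z)%R.

Definition R_complete (E : porderZmodType) : Prop :=
  (forall (x y : nat -> E), vs_decr x -> vs_decr y ->
     (exists s, vs_is_inf (fun n => x n + y n)%R s) ->
     (exists a, vs_is_inf x a) /\ (exists b, vs_is_inf y b)) /\
  (forall (x y : nat -> E), vs_incr x -> vs_incr y ->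
     (exists s, vs_is_sup (fun n => x n + y n)%R s) ->
     (exists a, vs_is_sup x a) /\ (exists b, vs_is_sup y b)).

(* (iv) valuations.  A (partial) map D -> E is represented by a domain *)
(* predicate D : V -> Prop together with a total function f : V -> E;   *)
(* only the values of f on D are relevant.                              *)

Section Valuations.
Context {d : Order.disp_t} {V : latticeType d} {E : porderZmodType}.

Definition is_valuation (D : V -> Prop) (f : V -> E) : Prop :=
  sublattice D /\
  (forall a b, D a -> D b -> a <= b -> f a <= f b) /\
  (forall a b, D a -> D b -> (f (a `&` b) + f (a `|` b) = f a + f b)%R).

Definition valuation_system (L : V -> Prop) (phi : V -> E) : Prop :=
  sigma_distributive V /\ po_group E /\ R_complete E /\ is_valuation L phi.

Definition extends (L : V -> Prop) (phi : V -> E)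
                   (C : V -> Prop) (psi : V -> E) : Prop :=
  (forall x, L x -> C x) /\ (forall x, L x -> psi x = phi x).

Definition PiDom (L : V -> Prop) (phi : V -> E) (x : V) : Prop :=
  exists a : nat -> V, vs_decr a /\ (forall n, L (a n)) /\ vs_is_inf a x /\
    exists e, vs_is_inf (fun n => phi (a n)) e.

Definition SigmaDom (L : V -> Prop) (phi : V -> E) (x : V) : Prop :=
  exists a : nat -> V, vs_incr a /\ (forall n, L (a n)) /\ vs_is_sup a x /\
    exists e, vs_is_sup (fun n => phi (a n)) e.

Definition PiExt (L : V -> Prop) (phi : V -> E) (g : V -> E) : Prop :=
  is_valuation (PiDom L phi) g /\
  forall (a : nat -> V) x e, vs_decr a -> (forall n, L (a n)) ->
    vs_is_inf a x -> vs_is_inf (fun n => phi (a n)) e -> g x = e.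

Definition SigmaExt (L : V -> Prop) (phi : V -> E) (g : V -> E) : Prop :=
  is_valuation (SigmaDom L phi) g /\
  forall (a : nat -> V) x e, vs_incr a -> (forall n, L (a n)) ->
    vs_is_sup a x -> vs_is_sup (fun n => phi (a n)) e -> g x = e.

Definition Pi_extendible (L : V -> Prop) (phi : V -> E) : Prop :=
  exists g, PiExt L phi g.

Definition Sigma_extendible (L : V -> Prop) (phi : V -> E) : Prop :=
  exists g, SigmaExt L phi g.

(* The transfinite hierarchy.  Ordinals are represented as elements of *)
(* an arbitrary well-ordered type T (a total order whose strict order   *)
(* is well founded); stage alpha only depends on the order type of the  *)
(* initial segment below alpha.                                         *)

Record stage := Stage {
  piOK : Prop;            (* phi is Pi_alpha-extendible    *)
  piD  : V -> Prop;       (* Pi_alpha L                    *)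
  pif  : V -> E;          (* Pi_alpha phi (on Pi_alpha L)  *)
  sgOK : Prop;            (* phi is Sigma_alpha-extendible *)
  sgD  : V -> Prop;       (* Sigma_alpha L                 *)
  sgf  : V -> E           (* Sigma_alpha phi               *)
}.

Definition same_map (D : V -> Prop) (f : V -> E) (D' : V -> Prop) (f' : V -> E)
  : Prop := (forall x, D x <-> D' x) /\ (forall x, D x -> f x = f' x).

Context {dT : Order.disp_t} {T : orderType dT}.

Definition is_zero (a : T) : Prop := forall b, ~ (b < a).
Definition succ_of (b a : T) : Prop := b < a /\ forall c, c < a -> c <= b.
Definition is_limit (a : T) : Prop :=
  ~ is_zero a /\ forall b, b < a -> exists c, b < c /\ c < a.

Definition hierarchy (L : V -> Prop) (phi : V -> E) (F : T -> stage) : Prop :=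
  forall a : T,
  (is_zero a ->
     piOK (F a) /\ same_map (piD (F a)) (pif (F a)) L phi /\
     sgOK (F a) /\ same_map (sgD (F a)) (sgf (F a)) L phi) /\
  (forall b, succ_of b a ->
     (piOK (F a) <-> sgOK (F b) /\ Pi_extendible (sgD (F b)) (sgf (F b))) /\
     (piOK (F a) ->
        (forall x, piD (F a) x <-> PiDom (sgD (F b)) (sgf (F b)) x) /\
        PiExt (sgD (F b)) (sgf (F b)) (pif (F a))) /\
     (sgOK (F a) <-> piOK (F b) /\ Sigma_extendible (piD (F b)) (pif (F b))) /\
     (sgOK (F a) ->
        (forall x, sgD (F a) x <-> SigmaDom (piD (F b)) (pif (F b)) x) /\
        SigmaExt (piD (F b)) (pif (F b)) (sgf (F a)))) /\
  (is_limit a ->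
     (piOK (F a) <-> forall b, b < a -> piOK (F b)) /\
     (piOK (F a) ->
        (forall x, piD (F a) x <-> exists2 b, b < a & piD (F b) x) /\
        (forall b x, b < a -> piD (F b) x -> pif (F a) x = pif (F b) x)) /\
     (sgOK (F a) <-> forall b, b < a -> sgOK (F b)) /\
     (sgOK (F a) ->
        (forall x, sgD (F a) x <-> exists2 b, b < a & sgD (F b) x) /\
        (forall b x, b < a -> sgD (F b) x -> sgf (F a) x = sgf (F b) x))).

Definition Pi_alpha_extendible (L : V -> Prop) (phi : V -> E) (a : T) : Prop :=
  exists F, hierarchy L phi F /\ piOK (F a).

Definition Sigma_alpha_extendible (L : V -> Prop) (phi : V -> E) (a : T) : Prop :=
  exists F, hierarchy L phi F /\ sgOK (F a).

End Valuations.

From HB Require Import structures.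
From mathcomp Require Import all_boot all_order all_algebra.
From Stdlib Require Import Classical ClassicalEpsilon FunctionalExtensionality.
Import Order.TTheory GRing.Theory.

(* Write k for Π or Σ and k' for the other kind.  Three facts about a single
   extension step drive the proof.  If f is a valuation extended by f', then a
   k-extension of f' restricts to a k-extension of f, the k-domain of f lies in
   that of f', and k-extensions are unique on their domain; σ-distributivity and
   R-completeness are exactly what make the k-domain of a valuation a
   sublattice.  Next, the stages of any hierarchy are valuations that increase
   with α, since Π_α φ ⊆ Π(Σ_α φ) and Σ_α φ ⊆ Σ(Π_α φ).  Transfinite induction
   then compares the hierarchies of φ and ψ stage by stage: at a successor the
   restriction property carries extendibility from ψ down to φ, at a limit both
   stages are unions of earlier ones.  Finally, a hierarchy of φ exists at all:
   it is built by well-founded recursion, choosing the extensions. *)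

Local Open Scope order_scope.

(** * Limits of monotone sequences *)

Lemma decr_homo {d} {T : porderType d} (s : nat -> T) :
  vs_decr s -> {homo s : m n / (m <= n)%N >-> n <= m}.
Proof. exact: homo_leq (@lexx _ T) (fun y x z yx zy => le_trans zy yx). Qed.

Lemma incr_homo {d} {T : porderType d} (s : nat -> T) :
  vs_incr s -> {homo s : m n / (m <= n)%N >-> m <= n}.
Proof. exact: homo_leq (@lexx _ T) (fun y x z => @le_trans _ _ y x z). Qed.

Section PoGroup.
Variable E : porderZmodType.
Hypothesis HE : po_group E.
Local Open Scope ring_scope.

Lemma po_lerD (x y z t : E) : x <= y -> z <= t -> x + z <= y + t.
Proof.
move=> /(HE _ _ z) xy /(HE _ _ y) zt; apply: le_trans xy _.
by rewrite addrC [y + t]addrC.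
Qed.

Lemma po_lerBlDr (x y z : E) : (x - y <= z) <-> (x <= z + y).
Proof. by split=> [/(HE _ _ y)|/(HE _ _ (- y))]; rewrite ?subrK ?addrK. Qed.

Lemma po_lerBrDr (x y z : E) : (x <= z - y) <-> (x + y <= z).
Proof. by split=> [/(HE _ _ y)|/(HE _ _ (- y))]; rewrite ?subrK ?addrK. Qed.

Lemma inf_add (x y : nat -> E) a b : vs_decr x -> vs_decr y ->
  vs_is_inf x a -> vs_is_inf y b -> vs_is_inf (fun n => x n + y n) (a + b).
Proof.
move=> dx dy [xa xinf] [yb yinf]; split=> [n|z zle]; first exact: po_lerD.
have zxy m n : z <= x m + y n.
  apply: le_trans (zle (maxn m n)) _.
  by apply: po_lerD;
    [apply: decr_homo dx _ _ (leq_maxl m n)|apply: decr_homo dy _ _ (leq_maxr m n)].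
have /po_lerBlDr : z - a <= b.
  apply: yinf => n; apply/po_lerBlDr; rewrite addrC; apply/po_lerBlDr.
  by apply: xinf => m; apply/po_lerBlDr.
by rewrite addrC.
Qed.

Lemma sup_add (x y : nat -> E) a b : vs_incr x -> vs_incr y ->
  vs_is_sup x a -> vs_is_sup y b -> vs_is_sup (fun n => x n + y n) (a + b).
Proof.
move=> ix iy [xa xsup] [yb ysup]; split=> [n|z zge]; first exact: po_lerD.
have xyz m n : x m + y n <= z.
  apply: le_trans _ (zge (maxn m n)).
  by apply: po_lerD;
    [apply: incr_homo ix _ _ (leq_maxl m n)|apply: incr_homo iy _ _ (leq_maxr m n)].
have /po_lerBrDr : b <= z - a.
  apply: ysup => n; apply/po_lerBrDr; rewrite addrC; apply/po_lerBrDr.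
  by apply: xsup => m; apply/po_lerBrDr.
by rewrite addrC.
Qed.

End PoGroup.

Section InfLattice.
Context {d : Order.disp_t} {V : latticeType d}.

Lemma inf_meet (a b : nat -> V) x y : vs_is_inf a x -> vs_is_inf b y ->
  vs_is_inf (fun n => a n `&` b n) (x `&` y).
Proof.
move=> [ax ainf] [bx binf]; split=> [n|z zle]; first exact: leI2.
rewrite lexI; apply/andP; split; [apply: ainf|apply: binf] => n;
  apply: le_trans (zle n) _; [exact: leIl|exact: leIr].
Qed.

Hypothesis HV : sigma_distributive V.

Lemma inf_join (a b : nat -> V) x y : vs_decr a -> vs_decr b ->
  vs_is_inf a x -> vs_is_inf b y -> vs_is_inf (fun n => a n `|` b n) (x `|` y).
Proof.
move=> da db ha hb; split=> [n|z zle]; first exact: leU2 (ha.1 n) (hb.1 n).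
have zab m n : z <= a m `|` b n.
  apply: le_trans (zle (maxn m n)) _.
  by apply: leU2;
    [apply: decr_homo da _ _ (leq_maxl m n)|apply: decr_homo db _ _ (leq_maxr m n)].
rewrite joinC; apply: (HV.1 y a x ha).2 => m; rewrite joinC.
by apply: (HV.1 (a m) b y hb).2; exact: zab.
Qed.

End InfLattice.

Section SupLattice.
Context {d : Order.disp_t} {V : latticeType d}.

Lemma sup_join (a b : nat -> V) x y : vs_is_sup a x -> vs_is_sup b y ->
  vs_is_sup (fun n => a n `|` b n) (x `|` y).
Proof. exact: (@inf_meet _ V^d). Qed.

Lemma sup_meet (HV : sigma_distributive V) (a b : nat -> V) x y :
  vs_incr a -> vs_incr b -> vs_is_sup a x -> vs_is_sup b y ->
  vs_is_sup (fun n => a n `&` b n) (x `&` y).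
Proof. exact: (@inf_join _ V^d (conj HV.2 HV.1)). Qed.

End SupLattice.

(** * Π- and Σ-extensions *)

Variant kind := Pi | Sigma.

Definition dual_kind (k : kind) : kind := if k is Pi then Sigma else Pi.

Lemma kind_cases (k k' : kind) : k' = k \/ k' = dual_kind k.
Proof. by case: k; case: k'; auto. Qed.

Definition seq_mono {d} {T : porderType d} (k : kind) : (nat -> T) -> Prop :=
  if k is Pi then vs_decr else vs_incr.

Definition seq_lim {d} {T : porderType d} (k : kind) : (nat -> T) -> T -> Prop :=
  if k is Pi then vs_is_inf else vs_is_sup.

Section SeqLim.
Context {d : Order.disp_t} {T : porderType d}.

Lemma seq_mono_const k (x : T) : seq_mono k (fun _ => x).
Proof. by case: k => n. Qed.

Lemma seq_lim_const k (x : T) : seq_lim k (fun _ => x) x.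
Proof. by case: k; split=> [n|y yx]; [exact: lexx|exact: yx 0%N|exact: lexx|exact: yx 0%N]. Qed.

Lemma seq_lim_eq k (s t : nat -> T) x :
  (forall n, s n = t n) -> seq_lim k s x -> seq_lim k t x.
Proof. by move=> /functional_extensionality ->. Qed.

End SeqLim.

Section SeqLimLattice.
Context {d : Order.disp_t} {V : latticeType d} (HV : sigma_distributive V).

Lemma seq_mono_meet k (a b : nat -> V) :
  seq_mono k a -> seq_mono k b -> seq_mono k (fun n => a n `&` b n).
Proof. by case: k => ma mb n; apply: leI2. Qed.

Lemma seq_mono_join k (a b : nat -> V) :
  seq_mono k a -> seq_mono k b -> seq_mono k (fun n => a n `|` b n).
Proof. by case: k => ma mb n; apply: leU2. Qed.

Lemma seq_lim_meet k (a b : nat -> V) x y : seq_mono k a -> seq_mono k b ->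
  seq_lim k a x -> seq_lim k b y -> seq_lim k (fun n => a n `&` b n) (x `&` y).
Proof. by case: k => ma mb; [exact: inf_meet|exact: sup_meet]. Qed.

Lemma seq_lim_join k (a b : nat -> V) x y : seq_mono k a -> seq_mono k b ->
  seq_lim k a x -> seq_lim k b y -> seq_lim k (fun n => a n `|` b n) (x `|` y).
Proof. by case: k => ma mb; [exact: inf_join|exact: sup_join]. Qed.

End SeqLimLattice.

Section SeqLimGroup.
Context {E : porderZmodType}.
Local Open Scope ring_scope.

Lemma seq_lim_add (HE : po_group E) k (x y : nat -> E) a b :
  seq_mono k x -> seq_mono k y -> seq_lim k x a -> seq_lim k y b ->
  seq_lim k (fun n => x n + y n) (a + b).
Proof. by case: k; [exact: inf_add|exact: sup_add]. Qed.

Lemma seq_lim_add_split (HR : R_complete E) k (x y : nat -> E) :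
  seq_mono k x -> seq_mono k y -> (exists s, seq_lim k (fun n => x n + y n) s) ->
  (exists a, seq_lim k x a) /\ (exists b, seq_lim k y b).
Proof. by case: k; [exact: HR.1|exact: HR.2]. Qed.

End SeqLimGroup.

Section Valuations.
Context {d : Order.disp_t} {V : latticeType d} {E : porderZmodType}.

Lemma extends_refl (D : V -> Prop) (f : V -> E) : extends D f D f.
Proof. by []. Qed.

Lemma extends_trans {D1 D2 D3 : V -> Prop} {f1 f2 f3 : V -> E} :
  extends D1 f1 D2 f2 -> extends D2 f2 D3 f3 -> extends D1 f1 D3 f3.
Proof.
move=> [D12 f12] [D23 f23]; split=> x D1x; first exact/D23/D12.
by rewrite f23 ?f12 //; exact: D12.
Qed.

Lemma extends_sub_dom {D D' : V -> Prop} (f : V -> E) :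
  (forall x, D x -> D' x) -> extends D f D' f.
Proof. by split. Qed.

Lemma same_map_refl (D : V -> Prop) (f : V -> E) : same_map D f D f.
Proof. by []. Qed.

Lemma same_map_extends {D D' : V -> Prop} {f f' : V -> E} :
  same_map D f D' f' -> extends D f D' f' /\ extends D' f' D f.
Proof.
by move=> [DD' ff']; split; split=> x Dx; rewrite ?ff' //; apply/DD'.
Qed.

Lemma valuation_same_map {D D' : V -> Prop} {f f' : V -> E} :
  same_map D f D' f' -> is_valuation D' f' -> is_valuation D f.
Proof.
move=> [DD' ff'] [D'L [f'm f'mod]].
have DL : sublattice D.
  by move=> x y /DD' D'x /DD' D'y; have [] := D'L x y D'x D'y; split; apply/DD'.
split=> //; split=> x y Dx Dy; have [DI DU] := DL x y Dx Dy; rewrite !ff' //.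
  by apply: f'm; apply/DD'.
by apply: f'mod; apply/DD'.
Qed.

Lemma sub_valuation {D D' : V -> Prop} {g : V -> E} :
  is_valuation D' g -> sublattice D -> (forall x, D x -> D' x) -> is_valuation D g.
Proof.
move=> [_ [gm gmod]] DL DD'.
by split=> //; split=> x y /DD' ? /DD' ?; [apply: gm|apply: gmod].
Qed.

Lemma chain_union_valuation {I : Type} {P : I -> Prop} {D : I -> V -> Prop}
    {f : I -> V -> E} {U : V -> Prop} {g : V -> E} :
  (forall i, P i -> is_valuation (D i) (f i)) ->
  (forall i j, P i -> P j ->
     extends (D i) (f i) (D j) (f j) \/ extends (D j) (f j) (D i) (f i)) ->
  (forall x, U x <-> exists2 i, P i & D i x) ->
  (forall i x, P i -> D i x -> g x = f i x) ->
  is_valuation U g.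
Proof.
move=> vD chain UD gf.
have common x y : U x -> U y -> exists2 i, P i & D i x /\ D i y.
  move=> /UD[i Pi Dx] /UD[j Pj Dy].
  by case: (chain i j Pi Pj) => [[ij _]|[ji _]]; [exists j|exists i]; auto.
have DL i x y : P i -> D i x -> D i y -> D i (x `&` y) /\ D i (x `|` y).
  by move=> Pi; apply: (vD i Pi).1.
split.
  move=> x y Ux Uy; have [i Pi [Dx Dy]] := common x y Ux Uy.
  by have [DI DU] := DL i x y Pi Dx Dy; split; apply/UD; exists i.
split=> x y Ux Uy; have [i Pi [Dx Dy]] := common x y Ux Uy;
  have [DI DU] := DL i x y Pi Dx Dy; have [_ [fm fmod]] := vD i Pi;
  rewrite !(gf i) //; [exact: fm|exact: fmod].
Qed.

Definition ext_dom (k : kind) : (V -> Prop) -> (V -> E) -> V -> Prop :=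
  if k is Pi then PiDom else SigmaDom.

Definition is_ext (k : kind) : (V -> Prop) -> (V -> E) -> (V -> E) -> Prop :=
  if k is Pi then PiExt else SigmaExt.

Definition extendible (k : kind) : (V -> Prop) -> (V -> E) -> Prop :=
  if k is Pi then Pi_extendible else Sigma_extendible.

Lemma ext_domE k (D : V -> Prop) (f : V -> E) x : ext_dom k D f x <->
  exists a, seq_mono k a /\ (forall n, D (a n)) /\ seq_lim k a x /\
    exists e, seq_lim k (fun n => f (a n)) e.
Proof. by case: k. Qed.

Lemma is_extE k (D : V -> Prop) (f g : V -> E) : is_ext k D f g <->
  is_valuation (ext_dom k D f) g /\
  forall a x e, seq_mono k a -> (forall n, D (a n)) -> seq_lim k a x ->
    seq_lim k (fun n => f (a n)) e -> g x = e.
Proof. by case: k. Qed.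

Lemma extendibleE k (D : V -> Prop) (f : V -> E) : extendible k D f <-> exists g, is_ext k D f g.
Proof. by case: k. Qed.

Lemma valuation_seq_mono {k} {D : V -> Prop} {f : V -> E} {a} : is_valuation D f ->
  (forall n, D (a n)) -> seq_mono k a -> seq_mono k (fun n => f (a n)).
Proof. by move=> [_ [fm _]] Da; case: k => ma n; apply: fm. Qed.

Lemma ext_dom_extends {k} {D D' : V -> Prop} {f f' : V -> E} {x} :
  extends D f D' f' -> ext_dom k D f x -> ext_dom k D' f' x.
Proof.
move=> [DD' ff'] /ext_domE[a [ma [Da [ax [e ae]]]]]; apply/ext_domE.
exists a; do !split => //; first by move=> n; exact: DD'.
by exists e; apply: seq_lim_eq ae => n; rewrite ff'.
Qed.

Lemma is_ext_extends {k} {D : V -> Prop} {f g : V -> E} :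
  is_ext k D f g -> extends D f (ext_dom k D f) g.
Proof.
move=> /is_extE[_ glim]; split=> x Dx.
  apply/ext_domE; exists (fun _ => x); do !split => //; first exact: seq_mono_const.
    exact: seq_lim_const.
  by exists (f x); exact: seq_lim_const.
exact: glim (seq_mono_const k x) (fun _ => Dx) (seq_lim_const k x) (seq_lim_const k (f x)).
Qed.

Lemma is_ext_unique {k} {D : V -> Prop} {f g g' : V -> E} {x} :
  is_ext k D f g -> is_ext k D f g' -> ext_dom k D f x -> g x = g' x.
Proof.
move=> /is_extE[_ glim] /is_extE[_ glim'] /ext_domE[a [ma [Da [ax [e ae]]]]].
by rewrite (glim a x e) // (glim' a x e).
Qed.

Context (HV : sigma_distributive V) (HE : po_group E) (HR : R_complete E).

Lemma ext_dom_sublattice k (D : V -> Prop) (f : V -> E) :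
  is_valuation D f -> sublattice (ext_dom k D f).
Proof.
move=> vf; have [DL [_ fmod]] := vf.
have mono_f c : (forall n, D (c n)) -> seq_mono k c -> seq_mono k (fun n => f (c n)).
  exact: valuation_seq_mono.
move=> x y /ext_domE[a [ma [Da [ax [ea fa]]]]] /ext_domE[b [mb [Db [bx [eb fb]]]]].
have DI n : D (a n `&` b n) := (DL _ _ (Da n) (Db n)).1.
have DU n : D (a n `|` b n) := (DL _ _ (Da n) (Db n)).2.
have mI : seq_mono k (fun n => a n `&` b n) by exact: seq_mono_meet.
have mU : seq_mono k (fun n => a n `|` b n) by exact: seq_mono_join.
(* The valuation identity turns the limit of φ(a_n) + φ(b_n) into a limit of
   φ(a_n ∧ b_n) + φ(a_n ∨ b_n), which R-completeness then splits. *)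
have fIU : exists s, seq_lim k (fun n => f (a n `&` b n) + f (a n `|` b n))%R s.
  exists (ea + eb)%R; apply: seq_lim_eq (fun n => esym (fmod _ _ (Da n) (Db n))) _.
  exact: seq_lim_add (mono_f a Da ma) (mono_f b Db mb) fa fb.
have [[eI fI] [eU fU]] := seq_lim_add_split HR k _ _ (mono_f _ DI mI) (mono_f _ DU mU) fIU.
split; apply/ext_domE; [exists (fun n => a n `&` b n)|exists (fun n => a n `|` b n)].
  by do !split => //; [exact: seq_lim_meet|exists eI].
by do !split => //; [exact: seq_lim_join|exists eU].
Qed.

Lemma is_ext_restrict {k} {D D' : V -> Prop} {f f' g : V -> E} :
  is_valuation D f -> extends D f D' f' ->
  is_ext k D' f' g -> is_ext k D f g.
Proof.
move=> vf Hext /is_extE[vg glim]; apply/is_extE; split.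
  apply: sub_valuation vg _ _; first exact: ext_dom_sublattice.
  by move=> x; exact: ext_dom_extends.
move=> a x e ma Da ax fa; apply: glim ma _ ax _ => [n|]; first exact: Hext.1.
by apply: seq_lim_eq fa => n; rewrite Hext.2.
Qed.

Lemma is_ext_mono {k} {D D' : V -> Prop} {f f' g g' : V -> E} :
  is_valuation D f -> extends D f D' f' ->
  is_ext k D f g -> is_ext k D' f' g' ->
  extends (ext_dom k D f) g (ext_dom k D' f') g'.
Proof.
move=> vf Hext hg hg'; split=> x Dx; first exact: ext_dom_extends Dx.
have hg'D : is_ext k D f g' by exact: is_ext_restrict hg'.
exact: is_ext_unique hg'D hg Dx.
Qed.

End Valuations.

(** * The hierarchy *)

Section Ordinals.
Context {dT : Order.disp_t} {T : orderType dT}.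

Lemma ordinal_cases (a : T) : is_zero a \/ (exists b, succ_of b a) \/ is_limit a.
Proof.
case: (classic (is_zero a)) => [|nz]; first by left.
right; case: (classic (exists b, succ_of b a)) => [|ns]; first by left.
right; split=> // b ba; apply: NNPP => nc; apply: ns; exists b; split=> // c ca.
by rewrite leNgt; apply/negP => bc; apply: nc; exists c.
Qed.

Lemma succ_of_unique {b b' a : T} : succ_of b a -> succ_of b' a -> b = b'.
Proof. by move=> [ba hb] [ba' hb']; apply/eqP; rewrite eq_le hb' ?hb. Qed.

Lemma limit_not_succ {a b : T} : is_limit a -> ~ succ_of b a.
Proof.
move=> [_ hl] [ba hb]; have [c [bc ca]] := hl b ba.
by have := hb c ca; rewrite leNgt bc.
Qed.

Lemma lt_succ_of {a b c : T} : succ_of b a -> c < a -> c = b \/ c < b.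
Proof. by move=> [_ hb] /hb; rewrite le_eqVlt => /orP[/eqP|]; [left|right]. Qed.

End Ordinals.

Section Hierarchy.
Context {d : Order.disp_t} {V : latticeType d} {E : porderZmodType}.
Context {dT : Order.disp_t} {T : orderType dT}.
Local Notation vstage := (@stage d V E).

Definition st_ok (k : kind) (s : vstage) : Prop :=
  if k is Pi then piOK s else sgOK s.
Definition st_dom (k : kind) (s : vstage) : V -> Prop :=
  if k is Pi then piD s else sgD s.
Definition st_map (k : kind) (s : vstage) : V -> E :=
  if k is Pi then pif s else sgf s.

Definition stage_of (ok : kind -> Prop) (D : kind -> V -> Prop) (f : kind -> V -> E)
  : vstage := Stage (ok Pi) (D Pi) (f Pi) (ok Sigma) (D Sigma) (f Sigma).

Lemma st_ok_of k ok D f : st_ok k (stage_of ok D f) = ok k.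
Proof. by case: k. Qed.
Lemma st_dom_of k ok D f : st_dom k (stage_of ok D f) = D k.
Proof. by case: k. Qed.
Lemma st_map_of k ok D f : st_map k (stage_of ok D f) = f k.
Proof. by case: k. Qed.

Definition st_extends (s : vstage) (k : kind) (t : vstage) (k' : kind) : Prop :=
  extends (st_dom k s) (st_map k s) (st_dom k' t) (st_map k' t).

Definition hier_at (L : V -> Prop) (phi : V -> E) (F : T -> vstage) (a : T) : Prop :=
  forall k,
  (is_zero a -> st_ok k (F a) /\ same_map (st_dom k (F a)) (st_map k (F a)) L phi) /\
  (forall b, succ_of b a ->
     (st_ok k (F a) <-> st_ok (dual_kind k) (F b) /\
        extendible k (st_dom (dual_kind k) (F b)) (st_map (dual_kind k) (F b))) /\
     (st_ok k (F a) ->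
        (forall x, st_dom k (F a) x <->
           ext_dom k (st_dom (dual_kind k) (F b)) (st_map (dual_kind k) (F b)) x) /\
        is_ext k (st_dom (dual_kind k) (F b)) (st_map (dual_kind k) (F b))
          (st_map k (F a)))) /\
  (is_limit a ->
     (st_ok k (F a) <-> forall b, b < a -> st_ok k (F b)) /\
     (st_ok k (F a) ->
        (forall x, st_dom k (F a) x <-> exists2 b, b < a & st_dom k (F b) x) /\
        (forall b x, b < a -> st_dom k (F b) x -> st_map k (F a) x = st_map k (F b) x))).

Lemma hierarchyP L phi F : hierarchy L phi F <-> forall a, hier_at L phi F a.
Proof.
split=> H a.
  have [Hz [Hs Hl]] := H a.
  by case=> /=; (split; [move=> /Hz; tauto|split; [move=> b /Hs; tauto|move=> /Hl; tauto]]).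
have [Hz1 [Hs1 Hl1]] := H a Pi; have [Hz2 [Hs2 Hl2]] := H a Sigma.
rewrite /= in Hz1 Hs1 Hl1 Hz2 Hs2 Hl2.
split; [move=> za|split; [move=> b ba|move=> la]].
- by have := Hz1 za; have := Hz2 za; tauto.
- by have := Hs1 b ba; have := Hs2 b ba; tauto.
- by have := Hl1 la; have := Hl2 la; tauto.
Qed.

Definition st_valuation (s : vstage) : Prop :=
  forall k, st_ok k s -> is_valuation (st_dom k s) (st_map k s).

Definition st_below (s t : vstage) : Prop :=
  forall k k', st_ok k t -> st_ok k' s /\ st_extends s k' t k.

Definition increasing_at (F : T -> vstage) (a : T) : Prop :=
  st_valuation (F a) /\ forall b, b < a -> st_below (F b) (F a).

Lemma st_below_trans r s t : st_below r s -> st_below s t -> st_below r t.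
Proof.
move=> rs st k k' okt; have [oks ext_st] := st k k okt.
by have [okr ext_rs] := rs k k' oks; split=> //; exact: extends_trans ext_rs ext_st.
Qed.

Lemma increasing_chain {F a b c k} : (forall b, b < a -> increasing_at F b) ->
  b < a -> c < a -> st_ok k (F b) -> st_ok k (F c) ->
  st_extends (F b) k (F c) k \/ st_extends (F c) k (F b) k.
Proof.
move=> IH ba ca okb okc; case: (ltgtP b c) => [bc|cb|<-]; [left|right|left].
- exact: ((IH c ca).2 b bc k k okc).2.
- exact: ((IH b ba).2 c cb k k okb).2.
- exact: extends_refl.
Qed.

Context (HV : sigma_distributive V) (HE : po_group E) (HR : R_complete E).
Context (wfT : well_founded (fun x y : T => x < y)).

Lemma st_extends_next {L phi F b k g} : hier_at L phi F b ->
  (forall c, c < b -> increasing_at F c) ->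
  (forall c, c < b -> st_below (F c) (F b)) ->
  st_ok (dual_kind k) (F b) ->
  is_ext k (st_dom (dual_kind k) (F b)) (st_map (dual_kind k) (F b)) g ->
  st_ok k (F b) /\ extends (st_dom k (F b)) (st_map k (F b))
    (ext_dom k (st_dom (dual_kind k) (F b)) (st_map (dual_kind k) (F b))) g.
Proof.
move=> Hb IH below ok' hg; have [Hz [Hs Hl]] := Hb k.
have base := is_ext_extends hg.
case: (ordinal_cases b) => [zb|[[c cb]|lb]].
- have [okb samek] := Hz zb; have [_ samek'] := (Hb (dual_kind k)).1 zb.
  split=> //; apply: extends_trans base.
  exact: extends_trans (same_map_extends samek).1 (same_map_extends samek').2.
- have [okE domE] := Hs c cb.
  have [okc' ext_c'] := below c cb.1 (dual_kind k) (dual_kind k) ok'.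
  have vc' := (IH c cb.1).1 _ okc'.
  have okb : st_ok k (F b).
    by apply/okE; split=> //; apply/extendibleE; exists g; exact: is_ext_restrict hg.
  split=> //; have [eqD hmap] := domE okb.
  apply: extends_trans (extends_sub_dom _ (fun x => (eqD x).1)) _.
  exact: (is_ext_mono HV HE HR vc' ext_c' hmap hg).
- have [okE domE] := Hl lb.
  have okb : st_ok k (F b).
    by apply/okE => c cb; exact: (below c cb (dual_kind k) k ok').1.
  split=> //; apply: extends_trans base; have [eqD hmap] := domE okb.
  split=> x /eqD[c cb Dx]; have [_ [inc agree]] := below c cb (dual_kind k) k ok'.
    exact: inc.
  by rewrite agree // (hmap c x cb Dx).
Qed.

Lemma increasing_at_succ L phi F a b :
  (forall c, c <= a -> hier_at L phi F c) ->
  (forall c, c < a -> increasing_at F c) -> succ_of b a -> increasing_at F a.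
Proof.
move=> Ha IH ba; have [_ belowb] := IH b ba.1.
have Hsucc k := (Ha a (lexx a) k).2.1 b ba.
have below_ba : st_below (F b) (F a).
  move=> k k' oka; have [okE domE] := Hsucc k; have [ok' _] := okE.1 oka.
  have [eqD hmap] := domE oka.
  have toDom := extends_sub_dom (st_map k (F a)) (fun x => (eqD x).2).
  case: (kind_cases k k') => ->.
    have IHb c : c < b -> increasing_at F c by move=> cb; exact: IH (lt_trans cb ba.1).
    have [okb ext] := st_extends_next (Ha b (ltW ba.1)) IHb belowb ok' hmap.
    by split=> //; exact: extends_trans ext toDom.
  by split=> //; exact: extends_trans (is_ext_extends hmap) toDom.
split.
  move=> k oka; have [eqD hmap] := (Hsucc k).2 oka.
  have /is_extE[vg _] := hmap.
  exact: valuation_same_map (conj eqD (fun _ _ => erefl)) vg.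
move=> c ca; case: (lt_succ_of ba ca) => [->|cb] //.
exact: st_below_trans (belowb c cb) below_ba.
Qed.

Lemma increasing_at_limit L phi F a : hier_at L phi F a ->
  (forall c, c < a -> increasing_at F c) -> is_limit a -> increasing_at F a.
Proof.
move=> Ha IH la; have Hlim k := (Ha k).2.2 la.
split.
  move=> k oka; have [okE domE] := Hlim k; have [eqD hmap] := domE oka.
  apply: chain_union_valuation _ _ eqD hmap => [i ia|i j ia ja].
    exact: (IH i ia).1 k (okE.1 oka i ia).
  exact: increasing_chain IH ia ja (okE.1 oka i ia) (okE.1 oka j ja).
move=> b ba k k' oka; have [c [bc ca]] := la.2 b ba.
have [okE domE] := Hlim k; have [eqD hmap] := domE oka.
have [okb ext] := (IH c ca).2 b bc k k' (okE.1 oka c ca).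
split=> //; apply: extends_trans ext _.
by split=> x Dx; [apply/eqD; exists c|exact: hmap].
Qed.

Lemma hier_increasing {L phi F a} : is_valuation L phi ->
  (forall c, c <= a -> hier_at L phi F c) -> increasing_at F a.
Proof.
move=> vL; elim/(well_founded_ind wfT): a => a IH Ha.
have IHa c : c < a -> increasing_at F c.
  by move=> ca; apply: IH => // b bc; apply: Ha; exact: le_trans bc (ltW ca).
case: (ordinal_cases a) => [za|[[b ba]|la]].
- split=> [k _|b /za []].
  by have [_ same] := (Ha a (lexx a) k).1 za; exact: valuation_same_map same vL.
- exact: increasing_at_succ Ha IHa ba.
- exact: increasing_at_limit (Ha a (lexx a)) IHa la.
Qed.

Lemma hier_compare {L phi C psi} {Fphi Fpsi : T -> vstage} : is_valuation L phi ->
  extends L phi C psi -> hierarchy L phi Fphi -> hierarchy C psi Fpsi ->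
  forall a k, (st_ok k (Fpsi a) -> st_ok k (Fphi a)) /\
    (st_ok k (Fphi a) -> st_ok k (Fpsi a) -> st_extends (Fphi a) k (Fpsi a) k).
Proof.
move=> vL Hext /hierarchyP H1 /hierarchyP H2 a.
elim/(well_founded_ind wfT): a => a IH k.
have [Hz1 [Hs1 Hl1]] := H1 a k; have [Hz2 [Hs2 Hl2]] := H2 a k.
case: (ordinal_cases a) => [za|[[b ba]|la]].
- have [ok1 same1] := Hz1 za; have [ok2 same2] := Hz2 za.
  split=> // _ _; apply: extends_trans (same_map_extends same2).2.
  exact: extends_trans (same_map_extends same1).1 Hext.
- have [okE1 domE1] := Hs1 b ba; have [okE2 domE2] := Hs2 b ba.
  have [IHok IHext] := IH b ba.1 (dual_kind k).
  have vb := (hier_increasing (a := b) vL (fun c _ => H1 c)).1 (dual_kind k).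
  split.
    move=> /okE2[ok2' /extendibleE[g hg]]; have ok1' := IHok ok2'.
    apply/okE1; split=> //; apply/extendibleE; exists g.
    exact: (is_ext_restrict HV HE HR (vb ok1') (IHext ok1' ok2') hg).
  move=> ok1 ok2; have [ok1' _] := okE1.1 ok1; have [ok2' _] := okE2.1 ok2.
  have [eqD1 h1] := domE1 ok1; have [eqD2 h2] := domE2 ok2.
  have [inc agree] := is_ext_mono HV HE HR (vb ok1') (IHext ok1' ok2') h1 h2.
  by split=> x /eqD1 Dx; [apply/eqD2; exact: inc|exact: agree].
- have [okE1 domE1] := Hl1 la; have [okE2 domE2] := Hl2 la.
  split=> [/okE2 ok2|ok1 ok2].
    by apply/okE1 => b ba; exact: (IH b ba k).1 (ok2 b ba).
  have [eqD1 h1] := domE1 ok1; have [eqD2 h2] := domE2 ok2.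
  split=> x /eqD1[b ba Dx];
    have [inc agree] := (IH b ba k).2 (okE1.1 ok1 b ba) (okE2.1 ok2 b ba).
    by apply/eqD2; exists b => //; exact: inc.
  by rewrite (h2 b x ba (inc x Dx)) (h1 b x ba Dx); exact: agree.
Qed.

Definition choose_ext (k : kind) (D : V -> Prop) (f : V -> E) : V -> E :=
  epsilon (inhabits f) (is_ext k D f).

Lemma choose_extP k D f : extendible k D f -> is_ext k D f (choose_ext k D f).
Proof. by move=> /extendibleE; exact: epsilon_spec. Qed.

Definition glue_below (a : T) (D : T -> V -> Prop) (f : T -> V -> E) (x : V) : E :=
  f (epsilon (inhabits a) (fun b => b < a /\ D b x)) x.

Lemma glue_belowE a D f b x : (forall c, c < a -> D c x -> f c x = f b x) ->
  b < a -> D b x -> glue_below a D f x = f b x.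
Proof.
move=> compat ba Dbx.
have [ca Dcx] := epsilon_spec (inhabits a) (fun c => c < a /\ D c x) (ex_intro _ b (conj ba Dbx)).
exact: compat.
Qed.

Definition succ_stage (s : vstage) : vstage :=
  stage_of
    (fun k => st_ok (dual_kind k) s /\
       extendible k (st_dom (dual_kind k) s) (st_map (dual_kind k) s))
    (fun k => ext_dom k (st_dom (dual_kind k) s) (st_map (dual_kind k) s))
    (fun k => choose_ext k (st_dom (dual_kind k) s) (st_map (dual_kind k) s)).

Definition limit_stage (a : T) (G : T -> vstage) : vstage :=
  stage_of
    (fun k => forall b, b < a -> st_ok k (G b))
    (fun k x => exists2 b, b < a & st_dom k (G b) x)
    (fun k => glue_below a (fun b => st_dom k (G b)) (fun b => st_map k (G b))).

Section Construction.
Variables (L : V -> Prop) (phi : V -> E).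

Definition base_stage : vstage := Stage True L phi True L phi.

Definition next_stage (a : T) (G : T -> vstage) : vstage :=
  if excluded_middle_informative (is_zero a) then base_stage
  else if excluded_middle_informative (exists b, succ_of b a)
  then succ_stage (G (epsilon (inhabits a) (fun b => succ_of b a)))
  else limit_stage a G.

Lemma next_stage_zero {a G} : is_zero a -> next_stage a G = base_stage.
Proof. by rewrite /next_stage; case: (excluded_middle_informative (is_zero a)). Qed.

Lemma next_stage_succ {a b G} : succ_of b a -> next_stage a G = succ_stage (G b).
Proof.
move=> ba; rewrite /next_stage.
case: (excluded_middle_informative (is_zero a)) => [za|nz] /=; first by have := za b ba.1.
case: (excluded_middle_informative (exists b, succ_of b a)) => [h|[]] /=; last by exists b.
by rewrite (succ_of_unique (epsilon_spec (inhabits a) _ h) ba).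
Qed.

Lemma next_stage_limit {a G} : is_limit a -> next_stage a G = limit_stage a G.
Proof.
move=> la; rewrite /next_stage.
case: (excluded_middle_informative (is_zero a)) => [za|nz] /=; first by case: la.1.
case: (excluded_middle_informative (exists b, succ_of b a)) => // -[b ba].
by case: (limit_not_succ la ba).
Qed.

(* Totalizes the recursive calls; the junk value outside [b < a] is never used. *)
Definition below_fun {a : T} (G : forall b, b < a -> vstage) (b : T) : vstage :=
  if excluded_middle_informative (b < a) is left ba then G b ba else base_stage.

Definition build_hierarchy : T -> vstage :=
  Fix wfT (fun _ => vstage) (fun a G => next_stage a (below_fun G)).

Lemma build_hierarchy_eq a : exists2 G, (forall b, b < a -> G b = build_hierarchy b) &
  build_hierarchy a = next_stage a G.
Proof.
exists (@below_fun a (fun b _ => build_hierarchy b)).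
  by move=> b ba; rewrite /below_fun; case: (excluded_middle_informative (b < a)).
rewrite /build_hierarchy Fix_eq // => x G G' eqG; congr next_stage.
apply: functional_extensionality => b; rewrite /below_fun.
by case: (excluded_middle_informative (b < x)).
Qed.

Lemma hier_at_zero {F a} : is_zero a -> F a = base_stage -> hier_at L phi F a.
Proof.
move=> za Fa k; rewrite Fa; split.
  by move=> _; case: k; split=> //; exact: same_map_refl.
split; first by move=> b ba; have := za b ba.1.
by move=> [].
Qed.

Lemma hier_at_succ {F a b} : succ_of b a -> F a = succ_stage (F b) -> hier_at L phi F a.
Proof.
move=> ba Fa k; rewrite Fa; split; first by move=> za; have := za b ba.1.
split; last by move=> la; case: (limit_not_succ la ba).
move=> c ca; rewrite -(succ_of_unique ba ca) st_ok_of st_dom_of st_map_of.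
split; first exact: iff_refl.
by move=> [_ ext]; split=> [x|]; [exact: iff_refl|exact: choose_extP].
Qed.

Lemma hier_at_limit {F a G} : is_limit a -> (forall b, b < a -> G b = F b) ->
  (forall b, b < a -> increasing_at F b) -> F a = limit_stage a G ->
  hier_at L phi F a.
Proof.
move=> la GF IH Fa k; rewrite Fa; split; first by move=> za; case: la.1.
split; first by move=> b ba; case: (limit_not_succ la ba).
move=> _; rewrite st_ok_of st_dom_of st_map_of.
split; first by split=> ok b ba; [rewrite -GF|rewrite GF] => //; exact: ok.
move=> ok; split=> [x|b x ba Dbx].
  by split=> -[b ba Dbx]; exists b => //; [rewrite -GF|rewrite GF].
have DGbx : st_dom k (G b) x by rewrite GF.
rewrite -(GF b ba); apply: (glue_belowE _ _ _ b) => // c ca Dcx.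
rewrite (GF c ca) (GF b ba) in Dcx *.
have okb : st_ok k (F b) by rewrite -GF //; exact: ok.
have okc : st_ok k (F c) by rewrite -GF //; exact: ok.
by case: (increasing_chain IH ca ba okc okb) => -[_ agree]; rewrite agree.
Qed.

Lemma build_hierarchyP : is_valuation L phi -> hierarchy L phi build_hierarchy.
Proof.
move=> vL; apply/hierarchyP => a; elim/(well_founded_ind wfT): a => a IH.
have [G GE Fa] := build_hierarchy_eq a.
case: (ordinal_cases a) => [za|[[b ba]|la]].
- by apply: (hier_at_zero za); rewrite Fa (next_stage_zero za).
- by apply: (hier_at_succ ba); rewrite Fa (next_stage_succ ba) GE // ba.1.
- apply: (hier_at_limit la GE); last by rewrite Fa (next_stage_limit la).
  move=> b ba; apply: hier_increasing vL _ => c cb; apply: IH.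
  exact: le_lt_trans cb ba.
Qed.

End Construction.

Lemma alpha_extendible_restrict {L C : V -> Prop} {phi psi : V -> E} k (alpha : T) :
  is_valuation L phi -> extends L phi C psi ->
  (exists F, hierarchy C psi F /\ st_ok k (F alpha)) ->
  (exists F, hierarchy L phi F /\ st_ok k (F alpha)) /\
  forall Fphi Fpsi : T -> vstage, hierarchy L phi Fphi -> hierarchy C psi Fpsi ->
    st_ok k (Fphi alpha) -> st_ok k (Fpsi alpha) ->
    st_extends (Fphi alpha) k (Fpsi alpha) k.
Proof.
move=> vL Hext [Fpsi [Hpsi ok]]; have Hb := build_hierarchyP _ _ vL.
split.
  by exists (build_hierarchy L phi); split=> //; exact: (hier_compare vL Hext Hb Hpsi alpha k).1.
by move=> Fphi Fpsi' H1 H2; exact: (hier_compare vL Hext H1 H2 alpha k).2.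
Qed.

End Hierarchy.

Theorem lemma5p34
  (dV : Order.disp_t) (V : latticeType dV) (E : porderZmodType)
  (L C : V -> Prop) (phi psi : V -> E)
  (HL : valuation_system L phi) (HC : valuation_system C psi)
  (Hext : extends L phi C psi)
  (dT : Order.disp_t) (T : orderType dT)
  (wfT : well_founded (fun x y : T => (x < y)%O))
  (alpha : T) :
  (Pi_alpha_extendible C psi alpha ->
     Pi_alpha_extendible L phi alpha /\
     forall (Fphi Fpsi : T -> stage),
       hierarchy L phi Fphi -> hierarchy C psi Fpsi ->
       piOK (Fphi alpha) -> piOK (Fpsi alpha) ->
       extends (piD (Fphi alpha)) (pif (Fphi alpha))
               (piD (Fpsi alpha)) (pif (Fpsi alpha))) /\
  (Sigma_alpha_extendible C psi alpha ->
     Sigma_alpha_extendible L phi alpha /\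
     forall (Fphi Fpsi : T -> stage),
       hierarchy L phi Fphi -> hierarchy C psi Fpsi ->
       sgOK (Fphi alpha) -> sgOK (Fpsi alpha) ->
       extends (sgD (Fphi alpha)) (sgf (Fphi alpha))
               (sgD (Fpsi alpha)) (sgf (Fpsi alpha))).
Proof.
have [HV [HE [HR vL]]] := HL.
split; [exact: (alpha_extendible_restrict HV HE HR wfT Pi alpha vL Hext)
       |exact: (alpha_extendible_restrict HV HE HR wfT Sigma alpha vL Hext)].
Qed.
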